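(* For every $n\ge1$, the star graph $G=K_{1,n-1}$ on $n$ vertices satisfies $$a_0(G)<a_1(G)<\cdots<a_{\lfloor\frac{n-1}{2}\rfloor}(G);$$ in particular its $a$-sequence satisfies the tail-peaked condition.
   Context: All graphs are finite simple graphs; $G|_I$ is the induced subgraph on $I\subseteq V(G)$. The signed $a$-number: $sa(\emptyset)=1$; if $G$ has connected components $G_1,\dots,G_\ell$, $sa(G)=\prod_k sa(G_k)$; if $G$ is connected and nonempty, $sa(G)=-\sum_{I\subsetneq V(G)}sa(G|_I)$ when $|V(G)|$ is even and $0$ when odd. $a(G)=|sa(G)|$, $a_i(G)=\sum_{I\subseteq V(G),|I|=2i}a(G|_I)$, and the $a$-sequence is $(a_0(G),a_1(G),\dots)$. A sequence satisfies the tail-peaked condition if it is eventually zero and is (weakly) increasing up to and including its second-to-last nonzero term. The star graph $K_{1,m}$ has one center vertex adjacent to each of $m$ leaves and no other edges. *)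

From mathcomp Require Import all_boot all_order all_algebra.
Set Implicit Arguments. Unset Strict Implicit. Unset Printing Implicit Defensive.
Import Order.TTheory GRing.Theory Num.Theory.

(* A finite simple graph: vertex finType T with a symmetric irreflexive
   adjacency relation e.  Induced subgraphs G|_I are represented by the
   vertex subset I : {set T}. *)
Definition simple_graph (T : finType) (e : rel T) : Prop :=
  irreflexive e /\ symmetric e.

Section SignedA.
Variables (T : finType) (e : rel T).

Definition induced_rel (I : {set T}) : rel T :=
  [rel x y | [&& x \in I, y \in I & e x y]].

Definition component (I : {set T}) (x : T) : {set T} :=
  [set y in I | connect (induced_rel I) x y].

Definition components (I : {set T}) : {set {set T}} :=
  [set component I x | x in I].

Definition connectedb (I : {set T}) : bool :=
  (I != set0) && [forall x in I, forall y in I, connect (induced_rel I) x y].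

(* signed a-number with fuel; fuel #|I|.+1 suffices since every recursive
   call is on a set of strictly smaller cardinality. *)
Fixpoint saF (k : nat) (I : {set T}) : int :=
  match k with
  | 0 => 1
  | k'.+1 =>
    if I == set0 then 1
    else if connectedb I then
      (if odd #|I| then 0 else - \sum_(J : {set T} | J \proper I) saF k' J)
    else \prod_(C in components I) saF k' C
  end%R.

Definition sa (I : {set T}) : int := saF #|I|.+1 I.

Definition a_num (I : {set T}) : nat := `|sa I|%N.

Definition a_seq (i : nat) : nat :=
  \sum_(I : {set T} | #|I| == i.*2) a_num I.

End SignedA.

(* tail-peaked: eventually zero and weakly increasing up to and including
   the second-to-last nonzero term (index m): s i <= s j whenever i <= j <= m,
   where j <= m iff there are nonzero terms at indices k1 < k2 with j <= k1. *)
Definition tail_peaked (s : nat -> nat) : Prop :=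
  (exists N, forall k, N <= k -> s k = 0) /\
  (forall i j, i <= j ->
     (exists k1 k2, [/\ j <= k1, k1 < k2, s k1 != 0 & s k2 != 0]) ->
     s i <= s j).

Definition star_rel (n : nat) : rel 'I_n :=
  fun x y => (val x == 0) != (val y == 0).
Arguments star_rel n : clear implicits.

Lemma star_simple n : simple_graph (star_rel n).
Proof. by split=> [x|x y]; rewrite /star_rel ?eqxx // eq_sym. Qed.

From mathcomp Require Import all_boot all_order all_algebra.
From mathcomp Require Import zify ring.
Set Implicit Arguments. Unset Strict Implicit. Unset Printing Implicit Defensive.
Import Order.TTheory GRing.Theory Num.Theory.

(* An induced subgraph of the star containing the centre is again a star
   K_{1,k}; one avoiding it is edgeless, so its signed a-number vanishes unless
   it is empty.  Hence a_{i+1}(K_{1,m}) = C(m, 2i+1) |sa(K_{1,2i+1})|, and the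
   recursion defining sa(K_{1,k}) says that the exponential generating function
   S of these numbers satisfies cosh(x) S(x) = -sinh(x), i.e. S = -tanh.  So
   |sa(K_{1,k})| is the tangent number T_k, and tan' = 1 + tan^2 gives
   T_{k+1} = sum_j C(k,j) T_j T_{k-j}, from which (k+1)(k+2) T_k <= 3 T_{k+2}.
   Since C(m,j+2) (j+1)(j+2) = C(m,j) (m-j)(m-j-1) and (m-j)(m-j-1) >= 6
   when j+2 < m, this bound gives C(m,j) T_j < C(m,j+2) T_{j+2}. *)

Lemma uphalfS_add_odd a b : odd a -> odd b -> uphalf (a + b).+1 = uphalf a + uphalf b.
Proof.
move=> oa ob; rewrite -[a]odd_double_half -[b]odd_double_half oa ob.
by rewrite /= !add0n add1n addnS -doubleD /= !doubleK addnS addSn.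
Qed.

Lemma mul_bin_down2 n j : j <= n ->
  'C(n.+2, j) * ((n - j).+1 * (n - j).+2) = 'C(n, j) * (n.+1 * n.+2).
Proof.
move=> jn; have := mul_bin_down n.+2 j; have := mul_bin_down n.+1 j.
rewrite -!subSn ?(leq_trans jn) //= => e1 e2.
transitivity ((n.+1 - j) * ((n.+2 - j) * 'C(n.+2, j))); first by ring.
by rewrite -e2 mulnCA -e1; ring.
Qed.

Lemma mul_bin_left2 m j :
  'C(m, j.+2) * (j.+1 * j.+2) = 'C(m, j) * ((m - j) * (m - j.+1)).
Proof.
have e1 := mul_bin_left m j; have e2 := mul_bin_left m j.+1.
transitivity (j.+1 * (j.+2 * 'C(m, j.+2))); first by ring.
by rewrite e2 mulnCA e1; ring.
Qed.

Local Open Scope ring_scope.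

Definition bconv (u v : nat -> int) (i : nat) : int :=
  \sum_(j < i.+1) 'C(i, j)%:Z * u j * v (i - j)%N.

Lemma bconv_weighted_le (u v w : nat -> int) n : (forall j, 0 <= u j) ->
  (forall k, (k <= n)%N -> (k.+1 * k.+2)%:Z * v k <= w k.+2) ->
  (n.+1 * n.+2)%:Z * bconv u v n <= \sum_(j < n.+1) 'C(n.+2, j)%:Z * u j * w (n.+2 - j)%N.
Proof.
move=> u_ge0 vw; rewrite /bconv mulr_sumr; apply: ler_sum => j _.
have jn : (j <= n)%N by rewrite -ltnS.
have -> : (n.+1 * n.+2)%:Z * ('C(n, j)%:Z * u j * v (n - j)%N) =
    ('C(n, j) * (n.+1 * n.+2))%N%:Z * (u j * v (n - j)%N) by rewrite !PoszM; ring.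
rewrite -mul_bin_down2 // PoszM -!mulrA ler_wpM2l // mulrCA ler_wpM2l //.
by rewrite !subSn ?(leq_trans jn) // vw ?leq_subr.
Qed.

Section CongruenceModX.
Variable R : nzRingType.

Definition eq_modX (M : nat) (p q : {poly R}) := forall i, (i < M)%N -> p`_i = q`_i.

Lemma eq_modX_le M M' p q : (M' <= M)%N -> eq_modX M p q -> eq_modX M' p q.
Proof. by move=> le_M h i iM; apply: h; apply: leq_trans iM le_M. Qed.

Lemma eq_modXM M p p' q q' :
  eq_modX M p p' -> eq_modX M q q' -> eq_modX M (p * q) (p' * q').
Proof.
move=> hp hq i iM; rewrite !coefM; apply: eq_bigr => j _.
have ji : (j <= i)%N by rewrite -ltnS.
by rewrite hp ?hq //; apply: leq_ltn_trans iM; rewrite ?leq_subr.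
Qed.

Lemma eq_modX_deriv M p q : eq_modX M.+1 p q -> eq_modX M p^`() q^`().
Proof. by move=> h i iM; rewrite !coef_deriv h. Qed.

Lemma eq_modX_cancel M (c y : {poly R}) :
  c`_0 = 1 -> eq_modX M (c * y) 0 -> eq_modX M y 0.
Proof.
move=> c0 h i; elim/ltn_ind: i => i IH iM; move: (h i iM).
rewrite coefM big_ord_recl subn0 c0 mul1r big1 ?addr0 // => j _.
by rewrite IH ?coef0 ?mulr0 //= /bump add1n; have := ltn_ord j; lia.
Qed.

End CongruenceModX.

Definition egf (u : nat -> int) (N : nat) : {poly rat} :=
  \poly_(i < N) ((u i)%:~R / (i`!)%:R).

Lemma fact_neq0 k : (k`!)%:R != 0 :> rat.
Proof. by rewrite pnatr_eq0 -lt0n fact_gt0. Qed.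

Lemma coef_egf u N i : (i < N)%N -> (egf u N)`_i = (u i)%:~R / (i`!)%:R.
Proof. by move=> iN; rewrite coef_poly iN. Qed.

Lemma eq_modX_deriv_egf u v N : (forall k, u k.+1 = v k) ->
  eq_modX N (egf u N.+1)^`() (egf v N.+1).
Proof.
move=> uv i iN; rewrite coef_deriv !coef_egf ?(ltn_trans iN) // uv factS.
rewrite natrM -mulr_natr; field.
by rewrite fact_neq0 nat1r pnatr_eq0.
Qed.

Lemma coef_egfM u v N i : (i < N)%N ->
  (egf u N * egf v N)`_i = (bconv u v i)%:~R / (i`!)%:R.
Proof.
move=> iN; rewrite coefM /bconv rmorph_sum mulr_suml; apply: eq_bigr => j _.
have ji : (j <= i)%N by rewrite -ltnS.
rewrite !coef_egf ?(leq_ltn_trans _ iN) ?leq_subr //.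
have <- : 'C(i, j)%:R * ((j`!)%:R * ((i - j)`!)%:R) = (i`!)%:R :> rat.
  by rewrite -!natrM bin_fact.
rewrite !rmorphM /=; field.
by rewrite !fact_neq0 pnatr_eq0 -lt0n bin_gt0.
Qed.

(* The proper induced subgraphs of K_{1,k} are the stars K_{1,j} (C(k,j) of
   them for each j < k), the empty graph, and nonempty edgeless graphs, whose
   signed a-number is 0. *)
Fixpoint sa_star_rec (fuel k : nat) : int :=
  if fuel is fuel'.+1 then
    if odd k then - (1 + \sum_(j < k) 'C(k, j)%:Z * sa_star_rec fuel' j) else 0
  else 0.

Definition sa_star k := sa_star_rec k.+1 k.

Lemma sa_star_rec_fuel f f' k : (k < f)%N -> (k < f')%N ->
  sa_star_rec f k = sa_star_rec f' k.
Proof.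
elim: f f' k => [//|f IH] [//|f'] k /= kf kf'; case: (odd k) => //.
congr (- (1 + _)); apply: eq_bigr => j _.
by rewrite (IH f') //; apply: leq_trans (ltn_ord j) _.
Qed.

Lemma sa_starE k : sa_star k =
  if odd k then - (1 + \sum_(j < k) 'C(k, j)%:Z * sa_star j) else 0.
Proof.
rewrite /sa_star /=; case: (odd k) => //; congr (- (1 + _)).
by apply: eq_bigr => j _; rewrite /sa_star (sa_star_rec_fuel (k := j) (f' := j.+1)).
Qed.

Lemma sa_star_even k : ~~ odd k -> sa_star k = 0.
Proof. by rewrite sa_starE => /negbTE ->. Qed.

Lemma sa_star1 : sa_star 1 = -1.
Proof. by rewrite sa_starE /= big_ord1 sa_star_even //= mulr0 addr0. Qed.

Lemma sa_star_binomial_sum k : odd k ->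
  \sum_(j < k.+1) 'C(k, j)%:Z * sa_star (k - j)%N = -1.
Proof.
move=> ok; rewrite (reindex_inj rev_ord_inj) /=.
rewrite (eq_bigr (fun j : 'I_k.+1 => 'C(k, j)%:Z * sa_star j)); last first.
  by move=> j _; rewrite subSS bin_sub ?subKn // -ltnS.
by rewrite big_ord_recr /= binn (sa_starE k) ok; ring.
Qed.

Definition cosh_coef k : int := if odd k then 0 else 1.
Definition sinh_coef k : int := if odd k then 1 else 0.

Lemma bconv_cosh_sa_star i : bconv cosh_coef sa_star i = - sinh_coef i.
Proof.
have parity j : (j < i.+1)%N -> odd (i - j) = odd i (+) odd j.
  by move=> ji; rewrite oddB // -ltnS.
rewrite /bconv /sinh_coef; case oi: (odd i).
  rewrite -(sa_star_binomial_sum oi); apply: eq_bigr => j _; rewrite /cosh_coef.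
  case oj: (odd j); last by rewrite mulr1.
  by rewrite sa_star_even ?mulr0 // parity // oi oj.
rewrite oppr0; apply: big1 => j _; rewrite /cosh_coef.
case oj: (odd j); first by rewrite mulr0 mul0r.
by rewrite sa_star_even ?mulr0 // parity // oi oj.
Qed.

Lemma sa_star_succ i : sa_star i.+1 = bconv sa_star sa_star i - (i == 0)%:Z.
Proof.
(* In EGF terms, with C = cosh and H = sinh: C S = -H, C' = H and H' = C give
   C (S' - S^2 + 1) = 0, and C can be cancelled since C(0) = 1. *)
pose C := egf cosh_coef i.+2; pose S := egf sa_star i.+2; pose H := egf sinh_coef i.+2.
have CS : eq_modX i.+2 (C * S) (- H).
  by move=> k ki; rewrite coef_egfM // bconv_cosh_sa_star coefN coef_egf // rmorphN mulNr.
have C'H : eq_modX i.+1 C^`() H.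
  by apply: eq_modX_deriv_egf => k; rewrite /cosh_coef /sinh_coef /=; case: odd.
have H'C : eq_modX i.+1 H^`() C.
  by apply: eq_modX_deriv_egf => k; rewrite /cosh_coef /sinh_coef /=; case: odd.
have ode : eq_modX i.+1 (C * (S^`() - S * S + 1)) 0.
  move=> k ki; have := eq_modX_deriv CS ki.
  rewrite derivM derivN coefD !coefN (eq_modXM C'H (fun _ _ => erefl) ki) H'C // => dCS.
  have CSS := eq_modXM (eq_modX_le (leqnSn _) CS) (fun _ _ => erefl) ki.
  rewrite coef0 mulrDr mulrBr mulrA mulr1 coefD coefB CSS mulNr coefN.
  by rewrite -[(C * S^`())`_k](addKr (H * S)`_k) dCS; ring.
have C0 : C`_0 = 1 by rewrite coef_egf // divr1.
have := eq_modX_cancel C0 ode (ltnSn i).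
rewrite coef0 coefD coefB (eq_modX_deriv_egf (v := sa_star \o succn)) //.
rewrite coef_egf // coef_egfM // coef1 /=.
case: i {C S H CS C'H H'C ode C0} => [|i] h.
  by rewrite sa_star1 /bconv big_ord1 sa_star_even.
apply/eqP; rewrite subr0 -(eqr_int rat) -subr_eq0.
move/eqP: h; rewrite addr0 -mulrBl mulf_eq0 invr_eq0 (negbTE (fact_neq0 _)) orbF.
by rewrite -rmorphB.
Qed.

(* The tangent numbers: k! [x^k] tan x. *)
Definition tangent k : int := (-1) ^+ uphalf k * sa_star k.

Lemma tangent_even k : ~~ odd k -> tangent k = 0.
Proof. by move=> ek; rewrite /tangent sa_star_even // mulr0. Qed.

Lemma tangent1 : tangent 1 = 1.
Proof. by rewrite /tangent sa_star1 expr1 mulrNN mulr1. Qed.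

Lemma tangent_succ i : (0 < i)%N -> tangent i.+1 = bconv tangent tangent i.
Proof.
move=> i_gt0; rewrite /tangent sa_star_succ eq_sym (ltn_eqF i_gt0) subr0 mulr_sumr.
apply: eq_bigr => j _; have ji : (j <= i)%N by rewrite -ltnS.
case oj: (odd j); last by rewrite (sa_star_even (negbT oj)) !(mulr0, mul0r).
case oij: (odd (i - j)); last by rewrite (sa_star_even (negbT oij)) !(mulr0, mul0r).
by rewrite -{1}(subnKC ji) uphalfS_add_odd // exprD; ring.
Qed.

Lemma tangent_ge0 k : 0 <= tangent k.
Proof.
elim/ltn_ind: k => -[|[|k]] IH; [by rewrite tangent_even | by rewrite tangent1 |].
rewrite tangent_succ //; apply: sumr_ge0 => j _.
by apply: mulr_ge0; first apply: mulr_ge0; rewrite ?IH // ltnS leq_subr.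
Qed.

Lemma tangent_bound k : (k.+1 * k.+2)%:Z * tangent k <= 3 * tangent k.+2.
Proof.
elim/ltn_ind: k => -[|[|l]] IH; first by rewrite !tangent_even.
  rewrite tangent1 tangent_succ // /bconv !big_ord_recr big_ord0 /=.
  by rewrite tangent1 !tangent_even.
have hR := bconv_weighted_le (n := l.+1) (w := fun m => 3 * tangent m) tangent_ge0
  (fun k kl => IH k (leq_ltn_trans kl (ltnSn _))).
rewrite -tangent_succ // (eq_bigr (fun j : 'I_l.+2 =>
  3 * ('C(l.+3, j)%:Z * tangent j * tangent (l.+3 - j)))) -?mulr_sumr in hR;
  last by move=> j _; ring.
rewrite (tangent_succ (i := l.+3)) // /bconv 2!big_ord_recr /=.
rewrite subnn (tangent_even (k := 0)) // mulr0 addr0 subSnn tangent1 mulr1 binSn.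
move: hR (tangent_ge0 l.+2); set R := \sum_(_ < _) _; set t := tangent _.
rewrite !PoszM; nia.
Qed.

Lemma tangent_odd_gt0 k : 0 < tangent k.*2.+1.
Proof.
elim: k => [|k IH]; first by rewrite tangent1.
have : 0 < 3 * tangent k.*2.+3 by apply: lt_le_trans (tangent_bound _); rewrite mulr_gt0.
by rewrite pmulr_rgt0 // doubleS.
Qed.

Lemma abs_tangent k : `|tangent k|%N = `|sa_star k|%N.
Proof. by rewrite /tangent abszM abszX /= exp1n mul1n. Qed.

Section Star.
Variable m : nat.
Local Notation T := 'I_m.+1.
Local Notation e := (star_rel m.+1).

Lemma star_relE (x y : T) : e x y = ((x == ord0) != (y == ord0)).
Proof. by []. Qed.

Lemma connectedb_star (I : {set T}) : ord0 \in I -> connectedb e I.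
Proof.
move=> I0; apply/andP; split; first by apply/set0Pn; exists ord0.
have edge0 x : x \in I -> x != ord0 -> induced_rel e I x ord0 && induced_rel e I ord0 x.
  by move=> xI x0; rewrite /induced_rel /= xI I0 !star_relE (negbTE x0) eqxx.
apply/forall_inP => x xI; apply/forall_inP => y yI; apply: (connect_trans (y := ord0)).
  by have [->|x0] := eqVneq x ord0; [exact: connect0 | exact/connect1/(andP (edge0 x xI x0)).1].
by have [->|y0] := eqVneq y ord0; [exact: connect0 | exact/connect1/(andP (edge0 y yI y0)).2].
Qed.

Lemma connect_star_center_free (I : {set T}) x y : ord0 \notin I ->
  connect (induced_rel e I) x y -> x = y.
Proof.
move=> I0 /connectP [[//|z p] /= /andP [+ _] _].
rewrite /induced_rel /= star_relE => /and3P [xI zI].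
have nx : x != ord0 by apply: contraNneq I0 => <-.
have nz : z != ord0 by apply: contraNneq I0 => <-.
by rewrite (negbTE nx) (negbTE nz).
Qed.

Lemma card_center_subsets (I : {set T}) j : ord0 \in I ->
  #|[set J : {set T} | (J \subset I) && (ord0 \in J) && (#|J| == j.+1)]| = 'C(#|I|.-1, j).
Proof.
move=> I0; have -> : #|I|.-1 = #|I :\ ord0| by rewrite (cardsD1 ord0 I) I0.
rewrite -cards_draws.
set D := [set A : {set T} | A \subset I :\ ord0 & #|A| == j].
have D0 A : A \in D -> ord0 \notin A.
  by rewrite inE => /andP [/subsetP sA _]; apply/negP => /sA; rewrite !inE eqxx.
rewrite -(@card_in_imset _ _ (fun A => ord0 |: A) D); last first.
  by move=> A1 A2 h1 h2 /= e12; rewrite -(setU1K (D0 _ h1)) e12 setU1K ?D0.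
congr #|pred_of_set _|; apply/setP => J; rewrite inE; apply/idP/imsetP.
  case/andP => /andP [sJ J0] cJ; exists (J :\ ord0); last by rewrite setD1K.
  by rewrite inE setSD //= (cardsD1 ord0 J) J0 in cJ *.
move=> [A DA ->]; have A0 := D0 _ DA; move: DA; rewrite inE => /andP [sA cA].
rewrite setU11 andbT subUset sub1set I0 /= cardsU1 A0 (eqP cA) eqxx andbT.
exact: subset_trans sA (subD1set _ _).
Qed.

Definition sa_star_set (I : {set T}) : int :=
  if ord0 \in I then sa_star #|I|.-1 else (I == set0)%:Z.

Lemma sum_sa_star_set_subset (I : {set T}) : ord0 \in I ->
  \sum_(J : {set T} | J \subset I) sa_star_set J =
  1 + \sum_(j < (#|I|.-1).+1) 'C(#|I|.-1, j)%:Z * sa_star j.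
Proof.
move=> I0; rewrite (bigID (fun J : {set T} => ord0 \in J)) /= addrC; congr (_ + _).
  rewrite (bigD1 set0) ?sub0set ?inE //= big1 ?addr0 => [|J /andP [/andP [_ J0] JN0]].
    by rewrite /sa_star_set inE eqxx.
  by rewrite /sa_star_set (negbTE J0) (negbTE JN0).
rewrite (partition_big (fun J : {set T} => inord #|J|.-1 : 'I_(#|I|.-1).+1) xpredT) //=.
apply: eq_bigr => j _; rewrite -natz mulr_natl -card_center_subsets // -sumr_const.
apply: eq_big => [J|J /andP [/andP [sJ J0] /eqP <-]]; last first.
  by rewrite /sa_star_set J0 inordK // ltnS -!subn1 leq_sub2r // subset_leq_card.
rewrite inE; case sJ: (J \subset I); case J0: (ord0 \in J) => //=.
have J_gt0 : (0 < #|J|)%N by apply/card_gt0P; exists ord0.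
rewrite -val_eqE /= inordK; first by case: #|J| J_gt0.
by rewrite ltnS -!subn1 leq_sub2r // subset_leq_card.
Qed.

Lemma sum_sa_star_set_proper (I : {set T}) : ord0 \in I ->
  \sum_(J : {set T} | J \proper I) sa_star_set J =
  1 + \sum_(j < #|I|.-1) 'C(#|I|.-1, j)%:Z * sa_star j.
Proof.
move=> I0; have := sum_sa_star_set_subset I0.
rewrite (bigD1 I) //= big_ord_recr /= binn mul1r addrA addrC [sa_star_set I]/sa_star_set I0.
by move/addIr <-; apply: eq_bigl => J; rewrite properEneq andbC.
Qed.

Lemma saF_set1 k (x : T) : saF e k.+1 [set x] = 0.
Proof.
rewrite /= -cards_eq0 cards1 /=.
suff -> : connectedb e [set x] by [].
apply/andP; split; first by rewrite -card_gt0 cards1.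
by apply/forall_inP => y /set1P ->; apply/forall_inP => z /set1P ->; apply: connect0.
Qed.

Lemma saF_star k (I : {set T}) : (#|I| < k)%N -> saF e k I = sa_star_set I.
Proof.
elim: k I => [//|k IH] I I_lt /=.
rewrite /sa_star_set; case: (I =P set0) => [->|/eqP IN0]; first by rewrite inE.
have I_gt0 : (0 < #|I|)%N by rewrite card_gt0.
case I0: (ord0 \in I).
  have oddI : odd #|I| = ~~ odd #|I|.-1 by rewrite -{1}(prednK I_gt0).
  rewrite connectedb_star // sa_starE oddI; case: (odd #|I|.-1) => //=.
  congr (- _); rewrite -sum_sa_star_set_proper //.
  by apply: eq_bigr => J; rewrite properEcard => /andP [_ JI]; exact: IH (leq_trans JI I_lt).
have [x xI] := set0Pn _ IN0; have x_path y := @connect_star_center_free I x y (negbT I0).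
case: ifP => [/andP [_ /forall_inP/(_ x xI)/forall_inP connI] | _].
  have : (#|I| <= 1)%N.
    by rewrite -(cards1 x) subset_leq_card //; apply/subsetP => y /connI/x_path <-; rewrite set11.
  by case: #|I| I_gt0 => [|[]].
have comp_x : component e I x = [set x].
  apply/setP => y; rewrite !inE; apply/andP/eqP => [[_ /x_path ->] // | ->].
  by split; [exact: xI | exact: connect0].
rewrite (bigD1 [set x]) /=; last by rewrite -comp_x imset_f.
by case: k {IH} I_lt => [|k]; [case: #|I| I_gt0 | rewrite saF_set1 mul0r].
Qed.

Lemma star_saE (I : {set T}) : sa e I = sa_star_set I.
Proof. exact: saF_star. Qed.

Lemma a_seq_star0 : a_seq e 0 = 1%N.
Proof.
rewrite /a_seq (big_pred1 set0) => [|I]; first by rewrite /a_num star_saE /sa_star_set inE eqxx.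
by rewrite /= cards_eq0.
Qed.

Lemma a_seq_starS i : a_seq e i.+1 = ('C(m, i.*2.+1) * `|tangent i.*2.+1|)%N.
Proof.
rewrite /a_seq (bigID (fun I : {set T} => ord0 \in I)) /= [X in (_ + X)%N]big1 ?addn0; last first.
  move=> I /andP [/eqP cI I0]; rewrite /a_num star_saE /sa_star_set (negbTE I0).
  by rewrite -cards_eq0 cI doubleS.
rewrite (eq_bigr (fun _ => `|tangent i.*2.+1|%N)); last first.
  by move=> I /andP [/eqP cI I0]; rewrite /a_num star_saE /sa_star_set I0 cI doubleS abs_tangent.
have := card_center_subsets i.*2.+1 (in_setT ord0); rewrite cardsT card_ord /= => <-.
rewrite sum_nat_const; congr (_ * _)%N; apply: eq_card => I.
by rewrite !inE subsetT doubleS andbC.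
Qed.

End Star.

Local Close Scope ring_scope.

Lemma tangent_bound_abs k : k.+1 * k.+2 * `|tangent k| <= 3 * `|tangent k.+2|.
Proof. by rewrite -lez_nat !PoszM !gez0_abs ?tangent_ge0 // tangent_bound. Qed.

Lemma a_seq_star_lt m i : i < m./2 ->
  a_seq (star_rel m.+1) i < a_seq (star_rel m.+1) i.+1.
Proof.
case: i => [|i] im; first by rewrite a_seq_star0 a_seq_starS tangent1 bin1 muln1; lia.
rewrite !a_seq_starS doubleS; set j := i.*2.+1.
have t_gt0 : 0 < `|tangent j| by rewrite absz_gt0 gt_eqF ?tangent_odd_gt0.
have bin_gt0 : 0 < 'C(m, j) by rewrite bin_gt0; lia.
have gap : 6 <= (m - j) * (m - j.+1) by nia.
have := tangent_bound_abs j; have := mul_bin_left2 m j.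
set A := `|tangent j|; set B := `|tangent j.+2|; set C0 := 'C(m, j); set C2 := 'C(m, j.+2).
move=> binE tb; have : 6 * (C0 * A) <= 3 * (C2 * B).
  apply: leq_trans (_ : (m - j) * (m - j.+1) * C0 * A <= _).
    by rewrite mulnA leq_mul2r leq_mul2r gap !orbT.
  by rewrite [_ * C0]mulnC -binE -mulnA [X in _ <= X]mulnCA leq_mul2l tb orbT.
nia.
Qed.

Lemma a_seq_star_eq0 m k : m < k.*2.-1 -> a_seq (star_rel m.+1) k = 0.
Proof. by case: k => [//|k] mk; rewrite a_seq_starS bin_small. Qed.

Lemma a_seq_star_le m i j : i <= j -> j <= m./2 ->
  a_seq (star_rel m.+1) i <= a_seq (star_rel m.+1) j.
Proof.
move=> ij jm; have interval : {in gtn m./2.+1 &, forall x y z, x < z < y -> z < m./2.+1}.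
  by move=> x y _; rewrite inE => ym z /andP [_ zy]; apply: ltn_trans zy ym.
apply: (homo_leq_in leqnn (fun _ _ _ => @leq_trans _ _ _) interval); rewrite ?inE //; try lia.
by move=> k _; rewrite inE => km; exact/ltnW/a_seq_star_lt.
Qed.

Theorem mainTheorem13 (n : nat) : 1 <= n ->
  (forall i, i < (n - 1)./2 ->
     a_seq (star_rel n) i < a_seq (star_rel n) i.+1) /\
  tail_peaked (a_seq (star_rel n)).
Proof.
case: n => [//|m] _; rewrite subn1 /=.
split; first exact: a_seq_star_lt.
split; first by exists m.+2 => k mk; apply: a_seq_star_eq0; lia.
move=> i j ij [k1 [k2 [jk1 k12 _ a_k2]]].
have : k2.*2.-1 <= m by rewrite leqNgt; apply: contra a_k2 => /a_seq_star_eq0 ->.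
by move=> k2m; apply: a_seq_star_le => //; lia.
Qed.
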